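(* Let $(X,d)$ be a locally compact metric space with a flow $\pi$ and let $M$ be a compact subset of $X$. Then $$\Omega(M)=\bigcap_{\varepsilon>0,\,t>0}P_t(M,\varepsilon).$$
   Context: A flow is a continuous map $\pi: X\times\mathbb{R}\to X$ with $\pi(x,0)=x$ and $\pi(\pi(x,t),s)=\pi(x,t+s)$; write $x\cdot t=\pi(x,t)$. For $x,y\in X$ and $\varepsilon,t>0$, an $(\varepsilon,t)$-chain from $x$ to $y$ is a pair of finite sequences $x=x_1,x_2,\dots,x_n,x_{n+1}=y$ in $X$ and $t_1,\dots,t_n$ in $\mathbb{R}^+$ with $t_i\ge t$ and $d(x_i\cdot t_i,x_{i+1})\le\varepsilon$ for all $i=1,\dots,n$. For $x\in X$, $\Omega(x)$ is the set of $y\in X$ such that for every $\varepsilon>0$ and $t>0$ there is an $(\varepsilon,t)$-chain from $x$ to $y$; for $M\subseteq X$, $\Omega(M)=\bigcup_{x\in M}\Omega(x)$. For $\varepsilon,t>0$, $P_t(M,\varepsilon)$ is the set of $y\in X$ such that there is an $(\varepsilon,t)$-chain from $x$ to $y$ for some $x\in M$. *)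

From Stdlib Require Import Reals List.
Open Scope R_scope.

Section Defs.
Variable X : Type.
Variable d : X -> X -> R.

Definition is_metric : Prop :=
  (forall x y, 0 <= d x y) /\
  (forall x y, d x y = 0 <-> x = y) /\
  (forall x y, d x y = d y x) /\
  (forall x y z, d x z <= d x y + d y z).

Definition d_open (U : X -> Prop) : Prop :=
  forall x, U x -> exists r, 0 < r /\ forall y, d x y < r -> U y.

Definition d_compact (K : X -> Prop) : Prop :=
  forall (I : Type) (U : I -> X -> Prop),
    (forall i, d_open (U i)) ->
    (forall x, K x -> exists i, U i x) ->
    exists l : list I, forall x, K x -> exists i, In i l /\ U i x.

Definition d_locally_compact : Prop :=
  forall x, exists K, d_compact K /\
    exists r, 0 < r /\ forall y, d x y < r -> K y.

Definition is_flow (pi : X -> R -> X) : Prop :=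
  (forall x, pi x 0 = x) /\
  (forall x t s, pi (pi x t) s = pi x (t + s)) /\
  (forall x t eps, 0 < eps -> exists delta, 0 < delta /\
     forall y s, d x y < delta -> Rabs (t - s) < delta ->
       d (pi x t) (pi y s) < eps).

Definition chain (pi : X -> R -> X) (eps t : R) (x y : X) : Prop :=
  exists (n : nat) (xs : nat -> X) (ts : nat -> R),
    (1 <= n)%nat /\ xs 0%nat = x /\ xs n = y /\
    forall i, (i < n)%nat -> t <= ts i /\ d (pi (xs i) (ts i)) (xs (S i)) <= eps.

Definition Omega_pt (pi : X -> R -> X) (x : X) : X -> Prop :=
  fun y => forall eps t, 0 < eps -> 0 < t -> chain pi eps t x y.

Definition Omega (pi : X -> R -> X) (M : X -> Prop) : X -> Prop :=
  fun y => exists x, M x /\ Omega_pt pi x y.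

Definition P (pi : X -> R -> X) (t : R) (M : X -> Prop) (eps : R) : X -> Prop :=
  fun y => exists x, M x /\ chain pi eps t x y.
End Defs.

(** If [y] lies outside [Omega(x)] for every [x] in [M], each [x] admits an
    [(e_x, t_x)] with no [(e_x, t_x)]-chain from [x] to [y]; by continuity of the
    time-[t_x] map this persists on a ball around [x]: a chain from a nearby [z]
    whose first time is at least [2 t_x] can be rerouted to start at [x], jumping
    first to [z . t_x].  Compactness of [M] makes [e_x] and [t_x] uniform, so for
    [e = min e_x] and [t = 2 max t_x] no point of [M] reaches [y] by an
    [(e, t)]-chain. *)
From Stdlib Require Import Reals List Lra Lia Classical.
Open Scope R_scope.

Lemma list_uniform_bounds {A : Type} (f g : A -> R) (l : list A) :
  (forall a, In a l -> 0 < f a) ->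
  exists m N, 0 < m /\ 0 < N /\ forall a, In a l -> m <= f a /\ g a <= N.
Proof.
  induction l as [|a l IH]; intros Hpos.
  - exists 1, 1; split; [lra | split; [lra | intros ? []]].
  - destruct IH as [m [N [Hm [HN Hb]]]]; [intros b Hb; apply Hpos; now right|].
    assert (Ha : 0 < f a) by (apply Hpos; now left).
    exists (Rmin (f a) m), (Rmax (g a) N); split; [|split].
    + now apply Rmin_glb_lt.
    + eapply Rlt_le_trans; [exact HN | apply Rmax_r].
    + intros b [<- | Hin]; split.
      * apply Rmin_l.
      * apply Rmax_l.
      * eapply Rle_trans; [apply Rmin_r | apply (Hb b Hin)].
      * eapply Rle_trans; [apply (Hb b Hin) | apply Rmax_r].
Qed.

Section MetricFlow.
Variable X : Type.
Variable d : X -> X -> R.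

Lemma ball_open (x : X) (r : R) :
  (forall x y z, d x z <= d x y + d y z) -> d_open X d (fun z => d x z < r).
Proof.
  intros Htri z Hz; exists (r - d x z); split; [lra|].
  intros w Hw; specialize (Htri x z w); lra.
Qed.

Lemma compact_uniform_bounds (K : X -> Prop) (Q : X -> R -> R -> R -> Prop) :
  is_metric X d -> d_compact X d K ->
  (forall x, K x -> exists e t r, 0 < e /\ 0 < r /\ Q x e t r) ->
  exists eps T, 0 < eps /\ 0 < T /\
    forall z, K z -> exists x e t r, Q x e t r /\ d x z < r /\ eps <= e /\ t <= T.
Proof.
  intros [_ [Hdeq [_ Htri]]] HK HQ.
  destruct (HK {p : X * R * R * R | let '(x, e, t, r) := p in
                                      0 < e /\ 0 < r /\ Q x e t r}
              (fun i z => let '(x, _, _, r) := proj1_sig i in d x z < r))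
    as [l Hl].
  - intros [[[[x e] t] r] Hg]; now apply ball_open.
  - intros x Kx; destruct (HQ x Kx) as [e [t [r Hg]]].
    exists (exist _ (x, e, t, r) Hg); simpl.
    rewrite (proj2 (Hdeq x x) eq_refl); tauto.
  - destruct (list_uniform_bounds (fun i => let '(_, e, _, _) := proj1_sig i in e)
                (fun i => let '(_, _, t, _) := proj1_sig i in t) l)
      as [eps [T [He [HT Hb]]]].
    { intros [[[[x e] t] r] Hg] _; simpl; tauto. }
    exists eps, T; split; [exact He | split; [exact HT |]].
    intros z Kz; destruct (Hl z Kz) as [[[[[x e] t] r] Hg] [Hin Hz]].
    destruct (Hb _ Hin) as [Hle1 Hle2]; simpl in *.
    pose proof Hg as [_ [_ HQx]]; exists x, e, t, r; auto.
Qed.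

Variable pi : X -> R -> X.

Lemma chain_mono (eps eps' t t' : R) (x y : X) :
  eps <= eps' -> t' <= t -> chain X d pi eps t x y -> chain X d pi eps' t' x y.
Proof.
  intros He Ht [n [xs [ts [Hn [H0 [Hend Hst]]]]]].
  exists n, xs, ts; do 3 (split; auto); intros i Hi; destruct (Hst i Hi); lra.
Qed.

Lemma chain_cons (eps t s : R) (x x1 y : X) :
  t <= s -> d (pi x s) x1 <= eps -> chain X d pi eps t x1 y ->
  chain X d pi eps t x y.
Proof.
  intros Hs Hd [n [xs [ts [Hn [H0 [Hend Hst]]]]]].
  exists (S n), (fun i => match i with 0%nat => x | S k => xs k end),
    (fun i => match i with 0%nat => s | S k => ts k end).
  split; [lia|]; split; [reflexivity|]; split; [now destruct n; [lia|]|].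
  intros [|i] Hi; [split; [exact Hs | now rewrite H0] | apply Hst; lia].
Qed.

Lemma chain_flow_start (eps s t : R) (z y : X) :
  (forall x t s, pi (pi x t) s = pi x (t + s)) -> 0 <= s ->
  chain X d pi eps (s + t) z y -> chain X d pi eps t (pi z s) y.
Proof.
  intros Hadd Hs [n [xs [ts [Hn [H0 [Hend Hst]]]]]].
  exists n, (fun i => match i with 0%nat => pi z s | S k => xs (S k) end),
    (fun i => match i with 0%nat => ts 0%nat - s | S k => ts (S k) end).
  split; [exact Hn|]; split; [reflexivity|]; split; [now destruct n; [lia|]|].
  intros [|i] Hi; destruct (Hst _ Hi) as [Ht Hd]; split; try lra.
  rewrite Hadd, <- H0; now replace (s + (ts 0%nat - s)) with (ts 0%nat) by ring.
Qed.

Lemma chain_transfer_start (eps t : R) (x z y : X) :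
  (forall x t s, pi (pi x t) s = pi x (t + s)) -> 0 <= t ->
  d (pi x t) (pi z t) <= eps -> chain X d pi eps (t + t) z y ->
  chain X d pi eps t x y.
Proof.
  intros Hadd Ht Hd Hc.
  apply (chain_cons eps t t x (pi z t)); [lra | exact Hd |].
  now apply chain_flow_start.
Qed.

End MetricFlow.

Theorem lemma3p3 (X : Type) (d : X -> X -> R) (pi : X -> R -> X) (M : X -> Prop) :
  is_metric X d -> d_locally_compact X d -> is_flow X d pi -> d_compact X d M ->
  forall y, Omega X d pi M y <->
    (forall eps t, 0 < eps -> 0 < t -> P X d pi t M eps y).
Proof.
  intros Hm _ [_ [Hadd Hcont]] HM y; split.
  - intros [x [Mx Hx]] eps t He Ht; exists x; auto.
  - intro HP; apply NNPP; intro Hy.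
    assert (Hsep : forall x, M x -> exists e t r, 0 < e /\ 0 < r /\
              (0 <= t /\ ~ chain X d pi e t x y /\
               forall z, d x z < r -> d (pi x t) (pi z t) < e)).
    { intros x Mx.
      destruct (not_all_ex_not _ _ (fun Hx => Hy (ex_intro _ x (conj Mx Hx))))
        as [e He].
      destruct (not_all_ex_not _ _ He) as [t Ht].
      apply imply_to_and in Ht as [He0 Ht]; apply imply_to_and in Ht as [Ht0 Hn].
      destruct (Hcont x t e He0) as [r [Hr Hr']].
      exists e, t, r; repeat split; try lra; auto.
      intros z Hz; apply Hr'; [exact Hz | rewrite Rminus_diag, Rabs_R0; lra]. }
    destruct (compact_uniform_bounds X d M _ Hm HM Hsep) as [eps [T [He [HT Hb]]]].
    destruct (HP eps (T + T)) as [z [Mz Hz]]; [lra | lra |].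
    destruct (Hb z Mz) as [x [e [t [r [[Ht [Hn Hr]] [Hxz [Hle1 Hle2]]]]]]].
    apply Hn, (chain_transfer_start X d pi e t x z y Hadd Ht).
    + now apply Rlt_le, Hr.
    + apply (chain_mono X d pi eps e (T + T)); auto; lra.
Qed.
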